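(* Every split graph that is CIS is $\cap$-edge simplicial.
   Context: A graph is split if its vertex set can be partitioned into a clique and a stable set. A graph is CIS if every maximal clique and every maximal stable set intersect. A clique $C$ is simplicial if $C=N[v]$ for some vertex $v$; a graph is edge simplicial if every edge lies in a simplicial clique; it is $\cap$-edge simplicial if both it and its complement are edge simplicial. *)

From mathcomp Require Import all_boot.
Set Implicit Arguments. Unset Strict Implicit. Unset Printing Implicit Defensive.

Definition simple_graph (T : finType) (e : rel T) : Prop :=
  symmetric e /\ irreflexive e.

Definition compl_rel (T : finType) (e : rel T) : rel T :=
  fun x y => (x != y) && ~~ e x y.

Definition is_clique (T : finType) (e : rel T) (C : {set T}) : bool :=
  [forall x in C, forall y in C, (x != y) ==> e x y].

Definition is_stable (T : finType) (e : rel T) (S : {set T}) : bool :=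
  [forall x in S, forall y in S, ~~ e x y].

Definition is_max_clique (T : finType) (e : rel T) (C : {set T}) : bool :=
  maxset (is_clique e) C.

Definition is_max_stable (T : finType) (e : rel T) (S : {set T}) : bool :=
  maxset (is_stable e) S.

Definition split_graph (T : finType) (e : rel T) : Prop :=
  exists K S : {set T},
    [/\ is_clique e K, is_stable e S, K :&: S = set0 & K :|: S = [set: T]].

Definition CIS (T : finType) (e : rel T) : Prop :=
  forall C S : {set T}, is_max_clique e C -> is_max_stable e S ->
    C :&: S != set0.

Definition closed_nbhd (T : finType) (e : rel T) (v : T) : {set T} :=
  v |: [set u | e v u].

Definition simplicial_clique (T : finType) (e : rel T) (C : {set T}) : Prop :=
  is_clique e C /\ exists v : T, C = closed_nbhd e v.

Definition edge_simplicial (T : finType) (e : rel T) : Prop :=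
  forall x y : T, e x y ->
    exists C : {set T}, simplicial_clique e C /\ x \in C /\ y \in C.

Definition cap_edge_simplicial (T : finType) (e : rel T) : Prop :=
  edge_simplicial e /\ edge_simplicial (compl_rel e).

From mathcomp Require Import all_boot.
Set Implicit Arguments. Unset Strict Implicit. Unset Printing Implicit Defensive.

(* Let (K, S) be a clique/stable split. Neighbours of a vertex of S lie in K,
   so its closed neighbourhood is a simplicial clique covering all edges at S.
   For edges inside K, extend K to a maximal clique C and S to a maximal stable
   set B; by CIS some v lies in C and B. Then v sees every other vertex of K,
   and N(v) misses B, hence S, so N[v] is contained in K + v, a subset of C.
   The complement of a split CIS graph is again split and CIS (cliques and
   stable sets swap), which gives the complementary half. *)

Section Cliques.
Variables (T : finType) (e : rel T).

Lemma is_cliqueP (C : {set T}) :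
  reflect {in C &, forall x y, x != y -> e x y} (is_clique e C).
Proof.
apply: (iffP forall_inP) => [cC x y xC yC | cC x xC].
  by move/forall_inP/(_ y yC)/implyP: (cC x xC).
by apply/forall_inP => y yC; apply/implyP; apply: cC.
Qed.

Lemma is_stableP (S : {set T}) :
  reflect {in S &, forall x y, ~~ e x y} (is_stable e S).
Proof.
apply: (iffP forall_inP) => [sS x y xS yS | sS x xS].
  exact: (forall_inP (sS x xS)).
by apply/forall_inP => y yS; apply: sS.
Qed.

Lemma stable_nbhd_notin (S : {set T}) x u :
  is_stable e S -> x \in S -> e x u -> u \notin S.
Proof. by move=> /is_stableP sS xS; apply: contraTN => uS; apply: sS. Qed.

Lemma clique_sub_closed_nbhd (C : {set T}) v :
  is_clique e C -> v \in C -> C \subset closed_nbhd e v.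
Proof.
move=> /is_cliqueP cC vC; apply/subsetP => u uC; rewrite !inE.
by have [//|/negbTE uv] := eqVneq u v; rewrite cC // eq_sym uv.
Qed.

Hypothesis e_sym : symmetric e.

Lemma simplicial_closed_nbhd (C : {set T}) v :
  is_clique e C -> (forall u, e v u -> u \in C) ->
  simplicial_clique e (closed_nbhd e v).
Proof.
move=> /is_cliqueP cC nbC; split; last by exists v.
apply/is_cliqueP => x y; rewrite !inE.
case/predU1P => [-> | vx] /predU1P [-> | vy] xy //; first by rewrite eqxx in xy.
  by rewrite e_sym.
exact: cC (nbC _ vx) (nbC _ vy) xy.
Qed.

End Cliques.

Section SplitCIS.
Variables (T : finType) (e : rel T) (K S : {set T}).
Hypotheses (e_sym : symmetric e) (cK : is_clique e K) (sS : is_stable e S).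
Hypothesis cover : K :|: S = [set: T].

Lemma in_split_clique u : u \notin S -> u \in K.
Proof. by have := in_setT u; rewrite -cover inE => /orP[] // ->. Qed.

Lemma nbhd_in_split_clique (B : {set T}) x u :
  is_stable e B -> S \subset B -> x \in B -> e x u -> u \in K.
Proof.
move=> sB SB xB xu; apply: in_split_clique.
by apply: contra (stable_nbhd_notin sB xB xu); apply/subsetP.
Qed.

Lemma CIS_split_clique_simplicial :
  CIS e ->
  exists v, simplicial_clique e (closed_nbhd e v) /\ K \subset closed_nbhd e v.
Proof.
move=> cis.
have [C mC KC] := maxset_exists cK.
have [B mB SB] := maxset_exists sS.
have [v] := set0Pn _ (cis C B mC mB); rewrite inE => /andP[vC vB].
have cC := maxsetp mC.
exists v; split.
  apply: (simplicial_closed_nbhd e_sym cC) => u vu.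
  exact: subsetP KC _ (nbhd_in_split_clique (maxsetp mB) SB vB vu).
exact: subset_trans KC (clique_sub_closed_nbhd cC vC).
Qed.

Lemma split_CIS_edge_simplicial : CIS e -> edge_simplicial e.
Proof.
move=> /CIS_split_clique_simplicial [v [simp_v Kv]] x y xy.
have simp_S w : w \in S -> simplicial_clique e (closed_nbhd e w).
  by move=> wS; apply: (simplicial_closed_nbhd e_sym cK) => u;
    apply: nbhd_in_split_clique sS (subxx S) wS.
have [xS | xS] := boolP (x \in S).
  exists (closed_nbhd e x); split; first exact: simp_S.
  by rewrite !inE eqxx xy orbT.
have [yS | yS] := boolP (y \in S).
  exists (closed_nbhd e y); split; first exact: simp_S.
  by rewrite !inE eqxx e_sym xy orbT.
by exists (closed_nbhd e v); rewrite !(subsetP Kv) ?in_split_clique.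
Qed.

End SplitCIS.

Lemma simple_split_CIS_edge_simplicial (T : finType) (e : rel T) :
  simple_graph e -> split_graph e -> CIS e -> edge_simplicial e.
Proof.
move=> [e_sym _] [K [S [cK sS _ cover]]].
exact: split_CIS_edge_simplicial cover.
Qed.

Section Complement.
Variables (T : finType) (e : rel T).

Lemma is_stable_compl (C : {set T}) : is_stable (compl_rel e) C = is_clique e C.
Proof.
apply/is_stableP/is_cliqueP => cC x y xC yC; last first.
  by rewrite /compl_rel negb_and !negbK; case: eqVneq => //= xy; apply: cC.
by move=> xy; move: (cC x y xC yC); rewrite /compl_rel xy negbK.
Qed.

Hypothesis e_irr : irreflexive e.

Lemma is_clique_compl (C : {set T}) : is_clique (compl_rel e) C = is_stable e C.
Proof.
apply/is_cliqueP/is_stableP => cC x y xC yC.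
  by have [-> | xy] := eqVneq x y; [rewrite e_irr | case/andP: (cC x y xC yC xy)].
by move=> xy; rewrite /compl_rel xy cC.
Qed.

Lemma split_graph_compl : split_graph e -> split_graph (compl_rel e).
Proof.
case=> K [S [cK sS KS cover]]; exists S, K.
by rewrite is_clique_compl is_stable_compl setIC setUC.
Qed.

Lemma CIS_compl : CIS e -> CIS (compl_rel e).
Proof.
move=> cis C S mC mS; rewrite setIC; apply: cis.
  by rewrite /is_max_clique -(maxset_eq _ is_stable_compl).
by rewrite /is_max_stable -(maxset_eq _ is_clique_compl).
Qed.

End Complement.

Lemma simple_graph_compl (T : finType) (e : rel T) :
  simple_graph e -> simple_graph (compl_rel e).
Proof.
move=> [e_sym _]; split=> [x y | x]; last by rewrite /compl_rel eqxx.
by rewrite /compl_rel eq_sym e_sym.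
Qed.

Theorem proposition26 (T : finType) (e : rel T) :
  simple_graph e -> split_graph e -> CIS e -> cap_edge_simplicial e.
Proof.
move=> simple_e split_e cis_e; have [_ e_irr] := simple_e.
split; first exact: simple_split_CIS_edge_simplicial.
apply: simple_split_CIS_edge_simplicial.
- exact: simple_graph_compl.
- exact: split_graph_compl e_irr split_e.
- exact: CIS_compl e_irr cis_e.
Qed.
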